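(* Consider equation (E) and assume each $\tau_i$ is non-decreasing. Let $p:[t_0,\infty)\to[0,\infty)$ be continuous with $p_i(t)\ge p(t)$ for all $t\ge t_0$ and $i=1,\dots,m$. If $$\limsup_{t\to+\infty}\prod_{j=1}^{m}\int_{\tau_j(t)}^{t}p(s)\,ds>\frac{1}{m^{m}},$$ then all solutions of (E) oscillate.
   Context: Equation (E) is $x'(t)+\sum_{i=1}^{m}p_i(t)\,x(\tau_i(t))=0$, $t\ge t_0$, where $m\ge1$ is an integer and, for each $i$, $p_i,\tau_i:[t_0,\infty)\to[0,\infty)$ are continuous, $\tau_i(t)\le t$ for $t\ge t_0$, and $\lim_{t\to\infty}\tau_i(t)=\infty$. Let $\tau(t)=\min_i\tau_i(t)$ and $\tau_{(-1)}(t)=\sup\{s:\tau(s)\le t\}$. A solution of (E) is a function $x\in C([T_0,\infty);\mathbb{R})$ for some $T_0\ge t_0$ which is continuously differentiable on $[\tau_{(-1)}(T_0),\infty)$ and satisfies (E) for $t\ge\tau_{(-1)}(T_0)$. A solution is oscillatory if it has arbitrarily large zeros; ''all solutions oscillate'' means every solution is oscillatory. *)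

From Stdlib Require Import Reals Lra.
Open Scope R_scope.

Fixpoint sumR (n : nat) (f : nat -> R) : R :=
  match n with O => 0 | S k => sumR k f + f k end.

Fixpoint prodR (n : nat) (f : nat -> R) : R :=
  match n with O => 1 | S k => prodR k f * f k end.

Fixpoint minR (n : nat) (f : nat -> R) : R :=
  match n with O => f O | S k => Rmin (minR k f) (f (S k)) end.

(* tau(t) = min_{1<=i<=m} tau_i(t), with indices shifted to 0..m-1 *)
Definition tau_min (m : nat) (tau : nat -> R -> R) (t : R) : R :=
  minR (pred m) (fun i => tau i t).

Definition has_integral (f : R -> R) (a b I : R) : Prop :=
  exists pr : Riemann_integrable f a b, RiemannInt pr = I.

Definition cont_from (f : R -> R) (a : R) : Prop :=
  forall t, a <= t -> continue_in f (fun s => a <= s) t.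

(* x is a solution of (E) with initial point T0:
   continuous on [T0,oo), and with T1 = tau_{(-1)}(T0) = sup{s >= t0 : tau(s) <= T0},
   x satisfies x'(t) = - sum_i p_i(t) x(tau_i(t)) for t > T1. *)
Definition is_solution (t0 : R) (m : nat) (p tau : nat -> R -> R)
    (x : R -> R) (T0 : R) : Prop :=
  t0 <= T0 /\ cont_from x T0 /\
  exists T1, is_lub (fun s => t0 <= s /\ tau_min m tau s <= T0) T1 /\
    forall t, T1 < t ->
      derivable_pt_lim x t (- sumR m (fun i => p i t * x (tau i t))).

Definition oscillatory (x : R -> R) : Prop :=
  forall T, exists t, T <= t /\ x t = 0.

(* A non-oscillatory solution has no zeros on some [T,oo), hence
   (the equation being linear) we may assume it is eventually positive.  Then
   y' <= 0 eventually, so y is eventually non-increasing.  For large t and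
   s in [tau_j(t), t] the monotonicity of the delays gives y(tau_i(s)) >=
   y(tau_i(t)), hence  y'(s) <= - K q(s)  with  K = sum_i y(tau_i(t)) > 0.
   Integrating over [tau_j(t), t] yields  K I_j <= y(tau_j(t)), where I_j is
   the integral of q over that interval.  Multiplying over j and applying the
   AM-GM inequality to the numbers y(tau_j(t)), whose sum is K, gives
   prod_j I_j <= 1/m^m for every large t, contradicting the limsup hypothesis. *)

From Stdlib Require Import Reals Lra Lia Classical.
From Coquelicot Require Import Coquelicot.
Open Scope R_scope.

Lemma sumR_ext n f g : (forall i, (i < n)%nat -> f i = g i) -> sumR n f = sumR n g.
Proof.
  induction n as [|n IH]; intros H; simpl; [reflexivity|].
  rewrite IH by (intros; apply H; lia). rewrite H by lia. reflexivity.
Qed.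

Lemma sumR_le n f g : (forall i, (i < n)%nat -> f i <= g i) -> sumR n f <= sumR n g.
Proof.
  induction n as [|n IH]; intros H; simpl; [lra|].
  assert (sumR n f <= sumR n g) by (apply IH; intros; apply H; lia).
  assert (f n <= g n) by (apply H; lia). lra.
Qed.

Lemma sumR_scal n k f : sumR n (fun i => k * f i) = k * sumR n f.
Proof. induction n as [|n IH]; simpl; [ring|]. rewrite IH; ring. Qed.

Lemma sumR_nonneg n f : (forall i, (i < n)%nat -> 0 <= f i) -> 0 <= sumR n f.
Proof.
  induction n as [|n IH]; intros H; simpl; [lra|].
  assert (0 <= sumR n f) by (apply IH; intros; apply H; lia).
  assert (0 <= f n) by (apply H; lia). lra.
Qed.

Lemma sumR_pos n f : (1 <= n)%nat -> (forall i, (i < n)%nat -> 0 < f i) -> 0 < sumR n f.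
Proof.
  destruct n as [|n]; [lia|]. intros _ H; simpl.
  assert (0 <= sumR n f) by (apply sumR_nonneg; intros; left; apply H; lia).
  assert (0 < f n) by (apply H; lia). lra.
Qed.

Lemma prodR_le n f g : (forall i, (i < n)%nat -> 0 <= f i <= g i) ->
  0 <= prodR n f <= prodR n g.
Proof.
  induction n as [|n IH]; intros H; simpl; [lra|].
  assert (0 <= prodR n f <= prodR n g) by (apply IH; intros; apply H; lia).
  assert (0 <= f n <= g n) by (apply H; lia).
  split; [apply Rmult_le_pos | apply Rmult_le_compat]; lra.
Qed.

Lemma prodR_scal n k f : prodR n (fun i => k * f i) = k ^ n * prodR n f.
Proof. induction n as [|n IH]; simpl; [ring|]. rewrite IH; ring. Qed.


(* Bernoulli's inequality for h >= -1 (the library only covers h >= 0). *)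
Lemma bernoulli k h : -1 <= h -> 1 + INR k * h <= (1 + h) ^ k.
Proof.
  intros Hh. induction k as [|k IH]; [simpl; lra|].
  rewrite S_INR; simpl. pose proof (pos_INR k).
  assert (0 <= INR k * (h * h)) by (apply Rmult_le_pos; nra).
  assert (0 <= (1 + h) * ((1 + h) ^ k - (1 + INR k * h))) by (apply Rmult_le_pos; lra).
  nra.
Qed.

(* Inductive step of AM-GM: adding a number a to n copies of their mean u. *)
Lemma amgm_step n u a : (1 <= n)%nat -> 0 <= u -> 0 <= a ->
  u ^ n * a <= ((INR n * u + a) / (INR n + 1)) ^ S n.
Proof.
  intros Hn Hu Ha. assert (Hn0 : 0 < INR n) by (apply lt_0_INR; lia).
  destruct Hu as [Hu|<-].
  - (* write the new mean as u (1 + h) and use Bernoulli *)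
    set (h := (a - u) / ((INR n + 1) * u)).
    assert (Hhd : h * ((INR n + 1) * u) = a - u) by (unfold h; field; lra).
    assert (HD : 0 < (INR n + 1) * u) by nra.
    assert (Hh : -1 <= h) by (destruct (Rle_or_lt (-1) h); [auto | nra]).
    assert (Emean : (INR n * u + a) / (INR n + 1) = u * (1 + h)) by (unfold h; field; lra).
    rewrite Emean, Rpow_mult_distr.
    pose proof (bernoulli (S n) h Hh) as B. rewrite S_INR in B.
    assert (Hun : 0 < u * u ^ n) by (pose proof (pow_lt u n Hu); nra).
    replace (u ^ n * a) with (u * u ^ n * (1 + (INR n + 1) * h))
      by (replace a with (u + h * ((INR n + 1) * u)) by lra; ring).
    simpl (u ^ S n). apply Rmult_le_compat_l; lra.
  - rewrite pow_i, Rmult_0_l by lia. apply pow_le.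
    apply Rmult_le_pos; [lra | left; apply Rinv_0_lt_compat; lra].
Qed.

Lemma amgm n f : (1 <= n)%nat -> (forall i, (i < n)%nat -> 0 <= f i) ->
  prodR n f <= (sumR n f / INR n) ^ n.
Proof.
  destruct n as [|k]; [lia|]. intros _. induction k as [|k IH]; intros H.
  - simpl. unfold Rdiv. rewrite Rinv_1. lra.
  - change (prodR (S (S k)) f) with (prodR (S k) f * f (S k)).
    change (sumR (S (S k)) f) with (sumR (S k) f + f (S k)).
    set (S0 := sumR (S k) f). set (a := f (S k)).
    assert (HIH : prodR (S k) f <= (S0 / INR (S k)) ^ S k) by (apply IH; intros; apply H; lia).
    assert (Ha : 0 <= a) by (apply H; lia).
    assert (HP : 0 <= prodR (S k) f)
      by (apply (prodR_le (S k) f f); intros; split; [apply H; lia | lra]).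
    assert (HS : 0 <= S0) by (apply sumR_nonneg; intros; apply H; lia).
    assert (Hk : 0 < INR (S k)) by (apply lt_0_INR; lia).
    assert (Hu : 0 <= S0 / INR (S k)) by (apply Rdiv_le_0_compat; lra).
    pose proof (amgm_step (S k) (S0 / INR (S k)) a ltac:(lia) Hu Ha) as Step.
    replace (INR (S k) * (S0 / INR (S k))) with S0 in Step by (field; lra).
    rewrite <- S_INR in Step.
    assert (prodR (S k) f * a <= (S0 / INR (S k)) ^ S k * a) by (apply Rmult_le_compat_r; lra).
    lra.
Qed.

Lemma amgm_product_bound n (I y : nat -> R) :
  (1 <= n)%nat -> 0 < sumR n y ->
  (forall j, (j < n)%nat -> 0 <= sumR n y * I j <= y j) ->
  prodR n I <= / INR n ^ n.
Proof.
  intros Hn HK Hj. set (K := sumR n y) in *.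
  assert (Hy : forall j, (j < n)%nat -> 0 <= y j) by (intros j Hjn; pose proof (Hj j Hjn); lra).
  destruct (prodR_le n (fun j => K * I j) y Hj) as [_ Hlow].
  rewrite prodR_scal in Hlow.
  pose proof (amgm n y Hn Hy) as Hup. fold K in Hup.
  unfold Rdiv in Hup. rewrite Rpow_mult_distr, pow_inv in Hup.
  assert (HKn : 0 < K ^ n) by (apply pow_lt; lra).
  apply (Rmult_le_reg_l (K ^ n)); [exact HKn | lra].
Qed.


Lemma derivable_continuity f t l : derivable_pt_lim f t l -> continuity_pt f t.
Proof.
  intros H. apply continuity_pt_filterlim, (ex_derive_continuous f t).
  exists l. apply is_derive_Reals, H.
Qed.

Lemma nonpos_derivative_nonincreasing (f df : R -> R) a b : a <= b ->
  (forall s, a <= s <= b -> derivable_pt_lim f s (df s)) ->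
  (forall s, a <= s <= b -> df s <= 0) -> f b <= f a.
Proof.
  intros Hab Hd Hn.
  destruct (MVT_gen f a b df) as [c [Hc E]];
    rewrite ?Rmin_left, ?Rmax_right in * by lra.
  - intros s Hs. apply is_derive_Reals, Hd. lra.
  - intros s Hs. apply (derivable_continuity f s (df s)), Hd. lra.
  - pose proof (Hn c Hc). nra.
Qed.

Lemma cont_from_interior (f : R -> R) a s : cont_from f a -> a < s -> continuity_pt f s.
Proof.
  unfold cont_from, continuity_pt, continue_in, limit1_in, limit_in, D_x, no_cond.
  intros H Hs eps Heps. destruct (H s (Rlt_le _ _ Hs) eps Heps) as [alp [Ha Hx]].
  exists (Rmin alp (s - a)). split; [apply Rmin_pos; lra|].
  intros z [[_ Hneq] Hd]. apply Hx. simpl in *. unfold R_dist in *.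
  pose proof (Rmin_l alp (s - a)). pose proof (Rmin_r alp (s - a)).
  apply Rabs_def2 in Hd. repeat split; [lra | exact Hneq | apply Rabs_def1; lra].
Qed.

Lemma zero_free_positive (y : R -> R) a :
  (forall s, a <= s -> continuity_pt y s) -> (forall s, a <= s -> y s <> 0) ->
  0 < y a -> forall s, a <= s -> 0 < y s.
Proof.
  intros Hc Hnz Ha s Hs. destruct (Rlt_or_le 0 (y s)) as [Hp|Hn]; [exact Hp|exfalso].
  assert (Has : a < s) by (destruct Hs as [Hs|<-]; [exact Hs | lra]).
  destruct (Ranalysis5.IVT_interv (fun u => - y u) a s) as [z [Hz Ez]];
    [ intros u Hu; apply continuity_pt_opp, Hc; lra | exact Has | lra
    | pose proof (Hnz s Hs); lra | ].
  apply (Hnz z); lra.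
Qed.

Lemma zero_free_sign (x : R -> R) a :
  (forall s, a <= s -> continuity_pt x s) -> (forall s, a <= s -> x s <> 0) ->
  exists c, forall s, a <= s -> 0 < c * x s.
Proof.
  intros Hc Hnz.
  set (c := if Rlt_dec 0 (x a) then 1 else -1). exists c.
  apply (zero_free_positive (fun s => c * x s)).
  - intros s Hs. apply continuity_pt_scal, Hc, Hs.
  - intros s Hs E. apply Rmult_integral in E.
    destruct E as [E|E]; [unfold c in E; destruct (Rlt_dec 0 (x a)); lra | exact (Hnz s Hs E)].
  - pose proof (Hnz a (Rle_refl a)). unfold c. destruct (Rlt_dec 0 (x a)); lra.
Qed.

Lemma eventually_all_large (f : nat -> R -> R) n :
  (forall i, (i < n)%nat -> forall M, exists T, forall t, T <= t -> M <= f i t) ->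
  forall M, exists T, forall i t, (i < n)%nat -> T <= t -> M <= f i t.
Proof.
  induction n as [|n IH]; intros H M; [exists 0; intros; lia|].
  destruct (IH ltac:(intros; apply H; lia) M) as [T1 H1].
  destruct (H n ltac:(lia) M) as [T2 H2]. exists (Rmax T1 T2). intros i t Hi Ht.
  pose proof (Rmax_l T1 T2). pose proof (Rmax_r T1 T2).
  destruct (Nat.eq_dec i n) as [->|]; [apply H2; lra | apply H1; [lia | lra]].
Qed.

Lemma RInt_derivative (q : R -> R) a t s :
  (forall u, a - 1 < u -> u < t + 1 -> continuity_pt q u) -> a <= s <= t ->
  is_derive (fun v => RInt q a v) s (q s).
Proof.
  intros Hc Hs. apply (is_derive_RInt q (RInt q a) a s).
  - exists (mkposreal (1/2) ltac:(lra)). intros b Hb.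
    assert (Hb' : Rabs (b - s) < 1/2) by exact Hb. apply Rabs_def2 in Hb'.
    apply (@RInt_correct R_CompleteNormedModule), (@ex_RInt_continuous R_CompleteNormedModule).
    intros z Hz. apply continuity_pt_filterlim. unfold Rmin, Rmax in Hz.
    destruct (Rle_dec a b); apply Hc; lra.
  - apply continuity_pt_filterlim, Hc; lra.
Qed.

Lemma integral_decay_estimate (y g q : R -> R) a t K : a <= t ->
  (forall s, a <= s <= t -> derivable_pt_lim y s (- g s)) ->
  (forall s, a <= s <= t -> K * q s <= g s) ->
  (forall s, a - 1 < s -> s < t + 1 -> continuity_pt q s) ->
  y t + K * RInt q a t <= y a.
Proof.
  intros Hat Hd Hle Hc.
  pose proof (nonpos_derivative_nonincreasing (fun s => y s + K * RInt q a s)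
                (fun s => - g s + K * q s) a t Hat) as Hmono.
  cbv beta in Hmono. rewrite RInt_point in Hmono. change (zero : R) with 0 in Hmono.
  enough (y t + K * RInt q a t <= y a + K * 0) by lra.
  apply Hmono.
  - intros s Hs. apply is_derive_Reals, (is_derive_plus y (fun s => K * RInt q a s)).
    + apply is_derive_Reals, Hd, Hs.
    + apply is_derive_scal, (RInt_derivative q a t s Hc Hs).
  - intros s Hs. pose proof (Hle s Hs). lra.
Qed.


Lemma solution_scale m (p tau : nat -> R -> R) (x : R -> R) c s :
  derivable_pt_lim x s (- sumR m (fun i => p i s * x (tau i s))) ->
  derivable_pt_lim (fun u => c * x u) s (- sumR m (fun i => p i s * (c * x (tau i s)))).
Proof.
  intros H. apply is_derive_Reals.
  replace (- sumR m (fun i => p i s * (c * x (tau i s))))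
    with (c * - sumR m (fun i => p i s * x (tau i s))).
  - apply is_derive_scal, is_derive_Reals, H.
  - rewrite (sumR_ext m (fun i => p i s * (c * x (tau i s)))
                     (fun i => c * (p i s * x (tau i s)))) by (intros; ring).
    rewrite sumR_scal. ring.
Qed.

Section PositiveSolution.

Variables (m : nat) (p tau : nat -> R -> R) (q y : R -> R) (T : R).
Hypothesis p_nonneg : forall i s, (i < m)%nat -> T <= s -> 0 <= p i s.
Hypothesis delay_le : forall i s, (i < m)%nat -> T <= s -> tau i s <= s.
Hypothesis delay_mono : forall i s t, (i < m)%nat -> T <= s -> s <= t -> tau i s <= tau i t.
Hypothesis q_cont : forall s, T - 1 < s -> continuity_pt q s.
Hypothesis q_nonneg : forall s, T <= s -> 0 <= q s.
Hypothesis q_le_p : forall i s, (i < m)%nat -> T <= s -> q s <= p i s.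
Hypothesis y_pos : forall s, T <= s -> 0 < y s.
Hypothesis y_sol : forall s, T <= s ->
  derivable_pt_lim y s (- sumR m (fun i => p i s * y (tau i s))).

Lemma solution_nonincreasing Tq :
  T <= Tq -> (forall i s, (i < m)%nat -> Tq <= s -> T <= tau i s) ->
  forall u v, Tq <= u -> u <= v -> y v <= y u.
Proof.
  intros HTq Hdel u v Hu Huv.
  apply (nonpos_derivative_nonincreasing y
           (fun s => - sumR m (fun i => p i s * y (tau i s))) u v Huv).
  - intros s Hs. apply y_sol. lra.
  - intros s Hs. enough (0 <= sumR m (fun i => p i s * y (tau i s))) by lra.
    apply sumR_nonneg. intros i Hi.
    apply Rmult_le_pos; [apply p_nonneg; [exact Hi | lra] |].
    left. apply y_pos, Hdel; [exact Hi | lra].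
Qed.

Lemma delayed_value_bound Tq Tr t j I :
  T <= Tq -> (forall i s, (i < m)%nat -> Tq <= s -> T <= tau i s) ->
  Tq <= Tr -> (forall i s, (i < m)%nat -> Tr <= s -> Tq <= tau i s) ->
  Tr <= t -> (j < m)%nat -> Tr <= tau j t -> has_integral q (tau j t) t I ->
  0 <= sumR m (fun i => y (tau i t)) * I <= y (tau j t).
Proof.
  intros HTq Hq HTr Hr Ht Hj Htj [pr Hpr].
  set (K := sumR m (fun i => y (tau i t))).
  assert (Hjt : tau j t <= t) by (apply delay_le; [exact Hj | lra]).
  assert (Hyt : forall i, (i < m)%nat -> 0 < y (tau i t))
    by (intros i Hi; apply y_pos; assert (Tq <= tau i t) by (apply Hr; [exact Hi | lra]); lra).
  assert (HK : 0 <= K) by (apply sumR_nonneg; intros i Hi; left; apply Hyt, Hi).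
  rewrite <- Hpr, <- RInt_Reals. split.
  - apply Rmult_le_pos; [exact HK |].
    apply RInt_ge_0; [exact Hjt | apply ex_RInt_Reals_1, pr | intros; apply q_nonneg; lra].
  - assert (0 < y t) by (apply y_pos; lra).
    enough (y t + K * RInt q (tau j t) t <= y (tau j t)) by lra.
    apply (integral_decay_estimate y (fun s => sumR m (fun i => p i s * y (tau i s)))).
    + exact Hjt.
    + intros s Hs. apply y_sol. lra.
    + (* y(tau_i(s)) >= y(tau_i(t)) since tau_i(s) <= tau_i(t) and y decreases *)
      intros s Hs. unfold K. rewrite Rmult_comm, <- sumR_scal.
      apply sumR_le. intros i Hi.
      assert (0 <= q s) by (apply q_nonneg; lra).
      assert (q s <= p i s) by (apply q_le_p; [exact Hi | lra]).
      assert (Tq <= tau i s) by (apply Hr; [exact Hi | lra]).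
      assert (tau i s <= tau i t) by (apply delay_mono; [exact Hi | lra | lra]).
      assert (y (tau i t) <= y (tau i s)) by (apply (solution_nonincreasing Tq HTq Hq); lra).
      pose proof (Hyt i Hi). nra.
    + intros s Hs _. apply q_cont. lra.
Qed.

End PositiveSolution.

Lemma no_positive_solution (t0 : R) (m : nat) (p tau : nat -> R -> R) (q y : R -> R) (T : R) :
  (1 <= m)%nat ->
  (forall i t, (i < m)%nat -> t0 <= t -> 0 <= p i t) ->
  (forall i t, (i < m)%nat -> t0 <= t -> 0 <= tau i t <= t) ->
  (forall i, (i < m)%nat -> forall M, exists T, forall t, T <= t -> M <= tau i t) ->
  (forall i s t, (i < m)%nat -> t0 <= s -> s <= t -> tau i s <= tau i t) ->
  cont_from q t0 ->
  (forall t, t0 <= t -> 0 <= q t) ->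
  (forall i t, (i < m)%nat -> t0 <= t -> q t <= p i t) ->
  (exists c, c > / (INR m ^ m) /\
     forall T, exists t, T <= t /\
       exists I : nat -> R,
         (forall j, (j < m)%nat -> has_integral q (tau j t) t (I j)) /\
         prodR m I > c) ->
  t0 + 1 <= T ->
  (forall s, T <= s -> 0 < y s) ->
  (forall s, T <= s -> derivable_pt_lim y s (- sumR m (fun i => p i s * y (tau i s)))) ->
  False.
Proof.
  intros Hm Hp0 Htau Htinf Hmono Hqc Hq0 Hqp [c [Hc Hlim]] HT Hypos Hysol.
  assert (p_nonneg : forall i s, (i < m)%nat -> T <= s -> 0 <= p i s)
    by (intros; apply Hp0; [assumption | lra]).
  assert (delay_le : forall i s, (i < m)%nat -> T <= s -> tau i s <= s)
    by (intros i s Hi Hs; apply (Htau i s Hi); lra).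
  assert (delay_mono : forall i s t, (i < m)%nat -> T <= s -> s <= t -> tau i s <= tau i t)
    by (intros; apply Hmono; [assumption | lra | assumption]).
  assert (q_cont : forall s, T - 1 < s -> continuity_pt q s)
    by (intros; apply (cont_from_interior q t0); [exact Hqc | lra]).
  assert (q_nonneg : forall s, T <= s -> 0 <= q s) by (intros; apply Hq0; lra).
  assert (q_le_p : forall i s, (i < m)%nat -> T <= s -> q s <= p i s)
    by (intros; apply Hqp; [assumption | lra]).
  (* thresholds Tq <= Tr <= Ts beyond which all delayed arguments exceed
     T, Tq and Tr respectively *)
  destruct (eventually_all_large tau m Htinf T) as [Ta Ha].
  pose proof (Rmax_l Ta T). pose proof (Rmax_r Ta T). set (Tq := Rmax Ta T) in *.
  destruct (eventually_all_large tau m Htinf Tq) as [Tb Hb].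
  pose proof (Rmax_l Tb Tq). pose proof (Rmax_r Tb Tq). set (Tr := Rmax Tb Tq) in *.
  destruct (eventually_all_large tau m Htinf Tr) as [Ts Hs].
  destruct (Hlim (Rmax Ts Tr)) as [t [Ht [I [HI HpI]]]].
  pose proof (Rmax_l Ts Tr). pose proof (Rmax_r Ts Tr).
  assert (Htau_t : forall i, (i < m)%nat -> Tr <= tau i t) by (intros; apply Hs; auto; lra).
  assert (Hbound : forall j, (j < m)%nat ->
            0 <= sumR m (fun i => y (tau i t)) * I j <= y (tau j t)).
  { intros j Hj.
    apply (delayed_value_bound m p tau q y T p_nonneg delay_le delay_mono q_cont
             q_nonneg q_le_p Hypos Hysol Tq Tr t j (I j)); try lra.
    - intros i s Hi Hsi. apply Ha; [exact Hi | lra].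
    - intros i s Hi Hsi. apply Hb; [exact Hi | lra].
    - exact Hj.
    - apply Htau_t, Hj.
    - apply HI, Hj. }
  assert (HK : 0 < sumR m (fun i => y (tau i t))).
  { apply sumR_pos; [exact Hm |]. intros i Hi. apply Hypos.
    pose proof (Htau_t i Hi). lra. }
  pose proof (amgm_product_bound m I (fun i => y (tau i t)) Hm HK Hbound). lra.
Qed.

Theorem corollary3p4 (t0 : R) (m : nat) (p tau : nat -> R -> R) (q : R -> R) :
  (1 <= m)%nat ->
  (forall i, (i < m)%nat -> cont_from (p i) t0) ->
  (forall i, (i < m)%nat -> cont_from (tau i) t0) ->
  (forall i t, (i < m)%nat -> t0 <= t -> 0 <= p i t) ->
  (forall i t, (i < m)%nat -> t0 <= t -> 0 <= tau i t <= t) ->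
  (forall i, (i < m)%nat -> forall M, exists T, forall t, T <= t -> M <= tau i t) ->
  (forall i s t, (i < m)%nat -> t0 <= s -> s <= t -> tau i s <= tau i t) ->
  cont_from q t0 ->
  (forall t, t0 <= t -> 0 <= q t) ->
  (forall i t, (i < m)%nat -> t0 <= t -> q t <= p i t) ->
  (* limsup_{t->oo} prod_j int_{tau_j(t)}^t q(s) ds > 1/m^m *)
  (exists c, c > / (INR m ^ m) /\
     forall T, exists t, T <= t /\
       exists I : nat -> R,
         (forall j, (j < m)%nat -> has_integral q (tau j t) t (I j)) /\
         prodR m I > c) ->
  forall (x : R -> R) (T0 : R), is_solution t0 m p tau x T0 -> oscillatory x.
Proof.
  intros Hm _ _ Hp0 Htau Htinf Hmono Hqc Hq0 Hqp Hlim x T0 [_ [_ [T1 [_ Hsol]]]] T.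
  apply NNPP. intros Hnozero.
  pose proof (Rmax_l (Rmax T (T1 + 1)) (t0 + 1)). pose proof (Rmax_r (Rmax T (T1 + 1)) (t0 + 1)).
  pose proof (Rmax_l T (T1 + 1)). pose proof (Rmax_r T (T1 + 1)).
  set (Ty := Rmax (Rmax T (T1 + 1)) (t0 + 1)) in *.
  destruct (zero_free_sign x Ty) as [c Hc].
  - intros s Hs. apply (derivable_continuity _ _ _ (Hsol s ltac:(lra))).
  - intros s Hs E. apply Hnozero. exists s. split; [lra | exact E].
  - apply (no_positive_solution t0 m p tau q (fun s => c * x s) Ty); auto.
    intros s Hs. apply solution_scale, Hsol. lra.
Qed.
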